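(* Let $G=(V,E)$ be a digraph with pairwise distinct vertices $a,b,1$ such that: (1) $1^+\neq\varnothing$; (2) there exists $a'\in V$ with $a^+\cap 1^-=\{a'\}$ and $a'^-\cap 1^-=\{a\}$; (3) $b\in 1^-$ and there exists $b'\in 1^-$ with $b'\in b^+$. Then $G$ is not congruence modular.
   Context: Digraphs are finite and loopless. For a vertex $x$, $x^+=\{v:(x,v)\in E\}$ and $x^-=\{v:(v,x)\in E\}$. A ternary polymorphism is a map $f:V^3\to V$ with $(f(a_1,a_2,a_3),f(b_1,b_2,b_3))\in E$ whenever all $(a_i,b_i)\in E$. $G$ is congruence modular if it has ternary polymorphisms $s_0,\dots,s_{2n},p$ (for some $n$) satisfying, for all vertices: $s_0(x,y,z)=x$; $s_i(x,y,x)=x$ for all $i\le 2n$; $s_i(x,y,y)=s_{i+1}(x,y,y)$ for even $i<2n$; $s_i(x,x,y)=s_{i+1}(x,x,y)$ for odd $i<2n$; $s_{2n}(x,y,y)=p(x,y,y)$; $p(x,x,y)=y$. *)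

From mathcomp Require Import all_boot.
Set Implicit Arguments. Unset Strict Implicit. Unset Printing Implicit Defensive.

Definition loopless (V : finType) (E : rel V) : Prop := forall x, ~~ E x x.

Definition outN (V : finType) (E : rel V) (x : V) : {set V} := [set v | E x v].
Definition inN  (V : finType) (E : rel V) (x : V) : {set V} := [set v | E v x].

Definition polymorphism3 (V : finType) (E : rel V) (f : V -> V -> V -> V) : Prop :=
  forall a1 a2 a3 b1 b2 b3, E a1 b1 -> E a2 b2 -> E a3 b3 ->
    E (f a1 a2 a3) (f b1 b2 b3).

(* Congruence modularity via Gumm terms s_0, ..., s_{2n}, p *)
Definition congruence_modular (V : finType) (E : rel V) : Prop :=
  exists (n : nat) (s : nat -> V -> V -> V -> V) (p : V -> V -> V -> V),
    (forall i, i <= 2 * n -> polymorphism3 E (s i)) /\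
    polymorphism3 E p /\
    (forall x y z, s 0 x y z = x) /\
    (forall i x y, i <= 2 * n -> s i x y x = x) /\
    (forall i x y, i < 2 * n -> ~~ odd i -> s i x y y = s i.+1 x y y) /\
    (forall i x y, i < 2 * n -> odd i -> s i x x y = s i.+1 x x y) /\
    (forall x y, s (2 * n) x y y = p x y y) /\
    (forall x y, p x x y = y).

From mathcomp Require Import all_boot.

Set Implicit Arguments.
Unset Strict Implicit.
Unset Printing Implicit Defensive.

(* Every polymorphism [f] with [f x y x = x] satisfies
   [f a a b = a <-> f a b b = a]: applying [f] to the edges [a -> a'], [a -> 1]
   or [b -> 1], and [b -> b'] forces the middle value to be the unique common
   neighbour [a'] of [a] and [1], whose unique in-neighbour inside [1^-] is [a].
   Along the Gumm chain this gives [s_i a b b = a] for all [i], hence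
   [p a b b = a]; but then the edge [p a b b -> p 1 1 b'] is [a -> b'], so
   [b' = a'] and [b = a]. *)

Section GummChain.

Variables (V : Type) (n : nat) (s : nat -> V -> V -> V -> V) (a b : V).

Hypothesis s0_first : forall x y z, s 0 x y z = x.
Hypothesis s_even : forall i x y, i < 2 * n -> ~~ odd i -> s i x y y = s i.+1 x y y.
Hypothesis s_odd : forall i x y, i < 2 * n -> odd i -> s i x x y = s i.+1 x x y.
Hypothesis s_aab_abb : forall i, i <= 2 * n -> s i a a b = a <-> s i a b b = a.

Lemma gumm_chain_abb i : i <= 2 * n -> s i a b b = a.
Proof.
elim: i => [|i IH] lt_i; first exact: s0_first.
have le_i : i <= 2 * n by apply: ltnW.
have [odd_i | even_i] := boolP (odd i); last by rewrite -s_even // IH.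
by apply/(s_aab_abb lt_i); rewrite -s_odd //; apply/(s_aab_abb le_i); apply: IH.
Qed.

End GummChain.

Section Configuration.

Variables (V : finType) (E : rel V) (a a' b b' one c : V).

Hypothesis a_a' : E a a'.
Hypothesis a'_one : E a' one.
Hypothesis a_one : E a one.
Hypothesis b_one : E b one.
Hypothesis b_b' : E b b'.
Hypothesis b'_one : E b' one.
Hypothesis one_c : E one c.
Hypothesis common_out_a_in_one : forall x, E a x -> E x one -> x = a'.
Hypothesis common_in_a'_in_one : forall x, E x a' -> E x one -> x = a.

Lemma polymorphism_aab_abb (f : V -> V -> V -> V) :
  polymorphism3 E f -> (forall x y, f x y x = x) ->
  f a a b = a <-> f a b b = a.
Proof.
move=> pol_f f_xyx.
have mid_one : E (f a' one b') one by rewrite -[X in E _ X](f_xyx one c); apply: pol_f.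
have aab_mid : E (f a a b) (f a' one b') by apply: pol_f.
have abb_mid : E (f a b b) (f a' one b') by apply: pol_f.
have aab_one : E (f a a b) one by rewrite -[X in E _ X](f_xyx one one); apply: pol_f.
have abb_one : E (f a b b) one by rewrite -[X in E _ X](f_xyx one one); apply: pol_f.
split=> [aab_a | abb_a].
- rewrite aab_a in aab_mid.
  rewrite (common_out_a_in_one aab_mid mid_one) in abb_mid.
  exact: common_in_a'_in_one.
- rewrite abb_a in abb_mid.
  rewrite (common_out_a_in_one abb_mid mid_one) in aab_mid.
  exact: common_in_a'_in_one.
Qed.

Lemma polymorphism_abb_eq_a (p : V -> V -> V -> V) :
  polymorphism3 E p -> (forall x y, p x x y = y) -> p a b b = a -> a = b.
Proof.
move=> pol_p p_xxy p_abb.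
have a_b' : E a b' by rewrite -p_abb -(p_xxy one b'); apply: pol_p.
have b'_a' : b' = a' by apply: common_out_a_in_one.
have b_a' : E b a' by rewrite -b'_a'.
by apply/esym/common_in_a'_in_one.
Qed.

End Configuration.

Lemma setI_eq1P (V : finType) (A B : {set V}) (x : V) :
  A :&: B = [set x] -> [/\ x \in A, x \in B & forall y, y \in A -> y \in B -> y = x].
Proof.
move=> AB_x; have: x \in A :&: B by rewrite AB_x set11.
rewrite inE => /andP[xA xB]; split=> // y yA yB.
by apply/set1P; rewrite -AB_x inE yA yB.
Qed.

Theorem lemma7p1 (V : finType) (E : rel V) (a b one : V) :
  loopless E ->
  a != b -> a != one -> b != one ->
  outN E one != set0 ->
  (exists a' : V, outN E a :&: inN E one = [set a'] /\
                  inN E a' :&: inN E one = [set a]) ->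
  b \in inN E one ->
  (exists b' : V, b' \in inN E one /\ b' \in outN E b) ->
  ~ congruence_modular E.
Proof.
move=> _ neq_ab _ _ /set0Pn[c one_c]
  [a' [/setI_eq1P[a_a' a'_one uniq_a'] /setI_eq1P[_ a_one uniq_a]]]
  b_one [b' [b'_one b_b']]
  [n [s [p [pol_s [pol_p [s0 [s_xyx [s_even [s_odd [s_p p_xxy]]]]]]]]]].
rewrite !inE in one_c a_a' a'_one a_one b_one b'_one b_b'.
have common_out x : E a x -> E x one -> x = a'.
  by move=> ax x1; apply: uniq_a'; rewrite inE.
have common_in x : E x a' -> E x one -> x = a.
  by move=> xa' x1; apply: uniq_a; rewrite inE.
have aab_abb := polymorphism_aab_abb a_a' a'_one a_one b_one b_b' b'_one one_c
  common_out common_in.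
have abb_eq_a := polymorphism_abb_eq_a a_one b_one b_b' b'_one common_out common_in.
have s_abb : s (2 * n) a b b = a.
  apply: (gumm_chain_abb s0 s_even s_odd) => // i le_i.
  by apply: aab_abb (pol_s i le_i) _ => x y; apply: s_xyx.
have p_abb : p a b b = a by rewrite -s_p.
by move/eqP: neq_ab; apply; apply: abb_eq_a pol_p p_xxy p_abb.
Qed.
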